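(* Let $k\ge5$ be an integer, let $\ell=1$, and let $G$ be a finite digraph. Then $$s_X(G)\le\frac{(k-1)^{k-1}}{(k+1)^{k+1}}\alpha^{k+2}.$$
   Context: Digraphs are finite, without loops; $xy$ denotes an arc from $x$ to $y$; two vertices are adjacent if at least one of $xy,yx$ is an arc. The oriented star $S_{k,1}$ has a center $c$, a set $O$ of $k$ out-leaves and one in-leaf $i$; its arcs are exactly $co$ ($o\in O$) and $ic$. For a digraph $G$ on $n$ vertices, let $\phi$ be a uniformly random map from $V(S_{k,1})$ to $V(G)$ (all $n^{k+2}$ maps equally likely), and let $\mathcal S$ be the set of maps $\phi$ that are isomorphisms from $S_{k,1}$ onto $G[\mathrm{Im}\,\phi]$ (in particular injective). $\rho(v)$ is the number of vertices adjacent to $v$ divided by $n$. $X=\{v:\rho(v)\ge1/2\}$, $\alpha=|X|/n$, and $s_X(G)=\Pr[\phi\in\mathcal S,\ \mathrm{Im}\,\phi\subseteq X]$. *)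

From HB Require Import structures.
From mathcomp Require Import all_boot all_order all_algebra.
Set Implicit Arguments. Unset Strict Implicit. Unset Printing Implicit Defensive.
Import Order.TTheory GRing.Theory Num.Theory.

Definition loopless (V : finType) (E : rel V) := forall x, ~~ E x x.

(* Oriented star S_{k,1}: vertex set 'I_(k+2); vertex 0 is the center c,
   vertex 1 the in-leaf i, vertices 2..k+1 the k out-leaves. *)
Definition star_arc (k : nat) (a b : 'I_k.+2) : bool :=
  ((val a == 0%N) && (2 <= val b)%N) || ((val a == 1%N) && (val b == 0%N)).

Definition star_iso (V : finType) (E : rel V) (k : nat)
  (phi : {ffun 'I_k.+2 -> V}) : bool :=
  injectiveb phi && [forall a, forall b, E (phi a) (phi b) == star_arc a b].

Definition adjdeg (V : finType) (E : rel V) (v : V) : nat :=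
  #|[set u | E u v || E v u]|.

(* X = {v : rho(v) >= 1/2}, i.e. 2 * deg(v) >= n *)
Definition Xset (V : finType) (E : rel V) : {set V} :=
  [set v | #|V| <= 2 * adjdeg E v]%N.

Definition alphaX (R : realFieldType) (V : finType) (E : rel V) : R :=
  #|Xset E|%:R / #|V|%:R.

(* s_X(G) = Pr[phi in S, Im phi ⊆ X] for phi uniform among all n^(k+2) maps *)
Definition sX (R : realFieldType) (V : finType) (E : rel V) (k : nat) : R :=
  #|[set phi : {ffun 'I_k.+2 -> V} |
       star_iso E phi && [forall a, phi a \in Xset E]]|%:R
  / (#|V| ^ k.+2)%:R.

From mathcomp Require Import all_boot all_order all_algebra.
From mathcomp Require Import ring.
Import Order.TTheory GRing.Theory Num.Theory.
Local Open Scope ring_scope.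
Set Implicit Arguments. Unset Strict Implicit.

(* Counting stars S_{k,1} inside X, with k = p + 1 out-leaves.  Distinguish
   the out-leaf o in position 2.  The center c then lies in
   S(o) = {c in X | c -> o}; the in-leaf lies in A(c,o) and each of the
   remaining p out-leaves lies in B(c,o), where A(c,o) (resp. B(c,o)) are the
   vertices of T(o) = {v in X \ {o} not adjacent to o} whose only arc with c
   is v -> c (resp. c -> v).  Hence the number of stars is at most
     sum_{o in X} sum_{c in S(o)} |A(c,o)| |B(c,o)|^p.
   Since A(c,o), B(c,o) are disjoint in T(o) and S(o), T(o) are disjoint in X,
   two applications of the weighted AM-GM inequality
     a b^n <= n^n/(n+1)^(n+1) (a+b)^(n+1)
   (first with n = p, then with n = p + 1) bound this sum by
     p^p/(p+2)^(p+2) |X|^(p+3),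
   which after dividing by n^(k+2) is the claim.  The argument only needs
   k >= 2. *)

(* Weighted AM-GM, from the arithmetic-geometric mean inequality applied to
   n a, b, ..., b: the maximum of a b^n under a + b = s is
   n^n/(n+1)^(n+1) s^(n+1). *)
Lemma amgm_power (R : realFieldType) (n : nat) (a b : R) :
  0 <= a -> 0 <= b -> (0 < n)%N ->
  a * b ^+ n <= (n%:R ^+ n / n.+1%:R ^+ n.+1) * (a + b) ^+ n.+1.
Proof.
move=> a0 b0 n0.
pose x (i : 'I_n.+1) := if i == ord0 then n%:R * a else b.
have x_ge0 : {in 'I_n.+1, forall i, 0 <= x i}.
  by move=> i _; rewrite /x; case: ifP => _ //; rewrite mulr_ge0 ?ler0n.
have x_lift (i : 'I_n) : x (lift ord0 i) = b.
  by rewrite /x eq_sym (negbTE (neq_lift _ _)).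
have := (leif_AGM x_ge0).1.
rewrite card_ord (eq_bigl xpredT) // (eq_bigl xpredT) //.
rewrite !big_ord_recl !(eq_bigr _ (fun i _ => x_lift i)) prodr_const sumr_const.
rewrite card_ord /x eqxx -[b *+ n]mulr_natl -mulrDr expr_div_n exprMn => AGM.
rewrite -(ler_pM2l (_ : 0 < n%:R)) ?ltr0n // mulrA.
by apply: (le_trans AGM); rewrite le_eqVlt exprS; apply/orP; left; apply/eqP; ring.
Qed.

Lemma amgm_nat (R : realFieldType) (n a b m : nat) :
  (0 < n)%N -> (a + b <= m)%N ->
  ((a * b ^ n)%:R : R) <= (n%:R ^+ n / n.+1%:R ^+ n.+1) * m%:R ^+ n.+1.
Proof.
move=> n0 abm; rewrite natrM natrX.
apply: (le_trans (amgm_power _ _ n0)); rewrite ?ler0n //.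
apply: ler_wpM2l; first by rewrite divr_ge0 // exprn_ge0 // ler0n.
by apply: lerXn2r; rewrite ?nnegrE ?addr_ge0 ?ler0n // -natrD ler_nat.
Qed.

Lemma amgm_const_mul (R : realFieldType) (p : nat) :
  (p%:R ^+ p / p.+1%:R ^+ p.+1) * (p.+1%:R ^+ p.+1 / p.+2%:R ^+ p.+2)
  = p%:R ^+ p / p.+2%:R ^+ p.+2 :> R.
Proof.
by rewrite mulrA -(mulrA _ _ (p.+1%:R ^+ p.+1)) mulVf ?mulr1 // expf_neq0 ?pnatr_eq0.
Qed.

Lemma card_disjoint_sub (T : finType) (A B C : {set T}) :
  [disjoint A & B] -> A :|: B \subset C -> (#|A| + #|B| <= #|C|)%N.
Proof.
move=> AB ABC; have := (leq_card_setU A B).2; rewrite AB => /eqP <-.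
exact: subset_leq_card.
Qed.

Lemma card_le_weight (R : numDomainType) (T : finType) (S : {set T}) (W : T -> R) :
  (forall t, 0 <= W t) -> (forall t, t \in S -> 1 <= W t) ->
  #|S|%:R <= \sum_t W t.
Proof.
move=> W_ge0 W_ge1.
have -> : #|S|%:R = \sum_(t in S) (1 : R) by rewrite sumr_const.
rewrite [X in _ <= X](bigID (mem S)) /= -[X in X <= _]addr0.
by apply: lerD; [exact: ler_sum | exact: sumr_ge0].
Qed.

Lemma sum_prod_indicators (R : comNzRingType) (I V : finType) (F : I -> {set V}) :
  \sum_(phi : {ffun I -> V}) \prod_i ((phi i \in F i)%:R : R) =
  \prod_i (#|F i|%:R : R).
Proof.
rewrite -(bigA_distr_bigA (fun i v => ((v \in F i)%:R : R))).
apply: eq_bigr => i _; rewrite -sumr_const [RHS]big_mkcond.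
by apply: eq_bigr => v _; case: (v \in F i).
Qed.

Section StarNeighbourhoods.
Variables (V : finType) (E : rel V).

Definition nonadjX (o : V) : {set V} :=
  [set v in Xset E | ~~ E v o && ~~ E o v && (v != o)].

Definition in_only (c o : V) : {set V} :=
  [set v in nonadjX o | E v c && ~~ E c v].

Definition out_only (c o : V) : {set V} :=
  [set v in nonadjX o | E c v && ~~ E v c].

Definition predsX (o : V) : {set V} := [set c in Xset E | E c o].

Lemma card_in_out_only (c o : V) :
  (#|in_only c o| + #|out_only c o| <= #|nonadjX o|)%N.
Proof.
apply: card_disjoint_sub.
  apply/pred0P => v /=; apply/negbTE; rewrite !inE.
  by apply/negP => /andP [/and3P [_ -> _] /and3P [_ _ ]].
by apply/subsetP => v; rewrite !inE => /orP [] /andP [].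
Qed.

Lemma card_preds_nonadj (o : V) :
  (#|predsX o| + #|nonadjX o| <= #|Xset E|)%N.
Proof.
apply: card_disjoint_sub.
  apply/pred0P => v /=; apply/negbTE; rewrite !inE.
  by apply/negP => /andP [/andP [_ ->] /and3P [_ /andP [] ]].
by apply/subsetP => v; rewrite !inE => /orP [] /andP [].
Qed.

(* The range allowed for position j of a star with center c and
   distinguished out-leaf o (in position 2). *)
Definition slot (c o : V) (j : nat) : {set V} :=
  if j == 0%N then [set c] else if j == 2%N then [set o]
  else if j == 1%N then in_only c o else out_only c o.

Lemma prod_card_slot (p : nat) (c o : V) :
  (\prod_(i < p.+3) #|slot c o i| = #|in_only c o| * #|out_only c o| ^ p)%N.
Proof.
rewrite -(big_mkord xpredT (fun j => #|slot c o j|)) big_ltn // big_ltn // big_ltn //.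
rewrite /slot /= !cards1 mul1n mul1n (eq_big_nat _ _ (F2 := fun _ => #|out_only c o|)).
  by rewrite prod_nat_const_nat !subSS subn0.
by move=> j /andP [j3 _]; case: j j3 => [|[|[|j]]].
Qed.

Definition starsX (k : nat) : {set {ffun 'I_k.+2 -> V}} :=
  [set phi | star_iso E phi && [forall a, phi a \in Xset E]].

Lemma star_in_slots (p : nat) (phi : {ffun 'I_p.+3 -> V}) :
  phi \in starsX p.+1 ->
  [/\ phi (inord 2) \in Xset E, phi ord0 \in predsX (phi (inord 2))
    & forall i, phi i \in slot (phi ord0) (phi (inord 2)) i].
Proof.
rewrite inE => /andP [/andP [/injectiveP phi_inj /forallP arcs] /forallP inX].
have arcE a b : E (phi a) (phi b) = star_arc a b.
  by apply/eqP; move/forallP: (arcs a) => /(_ b).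
have val2 : nat_of_ord (inord 2 : 'I_p.+3) = 2%N by rewrite inordK.
have inX' i : (#|V| <= 2 * adjdeg E (phi i))%N by have := inX i; rewrite inE.
split=> [||i]; first exact: inX.
  by rewrite inE inX arcE /star_arc /= val2.
rewrite /slot; case: ifP => [/eqP i0|i_n0].
  by rewrite inE; apply/eqP; congr (phi _); apply/val_inj.
case: ifP => [/eqP i2|i_n2].
  by rewrite inE; apply/eqP; congr (phi _); apply/val_inj; rewrite /= i2 val2.
have phi_i_n2 : phi i != phi (inord 2).
  by apply: contraFN i_n2 => /eqP /phi_inj ->; rewrite val2.
case: ifP => [/eqP i1|i_n1]; rewrite !inE inX' !arcE /star_arc /= val2 i_n0 /=.
  by rewrite i1 phi_i_n2.
by rewrite i_n1 phi_i_n2 orbF andbT; move: i_n0 i_n1; case: (nat_of_ord i) => [|[|j]].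
Qed.

Lemma card_starsX (R : numFieldType) (p : nat) :
  #|starsX p.+1|%:R <= \sum_(o in Xset E) \sum_(c in predsX o)
     ((#|in_only c o| * #|out_only c o| ^ p)%:R : R).
Proof.
pose W (phi : {ffun 'I_p.+3 -> V}) : R := \sum_(o in Xset E) \sum_(c in predsX o)
  \prod_i ((phi i \in slot c o i)%:R : R).
have W_ge0 phi : 0 <= W phi.
  by do 2!apply: sumr_ge0 => ? _; apply: prodr_ge0 => ? _; exact: ler0n.
apply: le_trans (card_le_weight (W := W) W_ge0 _) _.
  move=> phi /star_in_slots [o_inX c_in_preds phi_in_slots].
  rewrite /W (bigD1 _ o_inX) (bigD1 _ c_in_preds) /=.
  rewrite big1 => [|i _]; last by rewrite phi_in_slots.
  rewrite -addrA lerDl addr_ge0 // sumr_ge0 // => [c _|o _].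
    by apply: prodr_ge0 => ? _; exact: ler0n.
  by apply: sumr_ge0 => ? _; apply: prodr_ge0 => ? _; exact: ler0n.
rewrite /W exchange_big; apply: ler_sum => o _; rewrite exchange_big.
apply: ler_sum => c _.
by rewrite sum_prod_indicators -natr_prod prod_card_slot.
Qed.

(* For a fixed out-leaf o: AM-GM over the in-leaf and the remaining out-leaves
   (A, B disjoint in T(o)), then over the center and T(o) (disjoint in X). *)
Lemma sum_centers_bound (R : realFieldType) (p : nat) (o : V) : (0 < p)%N ->
  \sum_(c in predsX o) ((#|in_only c o| * #|out_only c o| ^ p)%:R : R)
  <= (p%:R ^+ p / p.+2%:R ^+ p.+2) * #|Xset E|%:R ^+ p.+2.
Proof.
move=> p_gt0.
apply: (@le_trans _ _ (\sum_(c in predsX o)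
  (p%:R ^+ p / p.+1%:R ^+ p.+1) * #|nonadjX o|%:R ^+ p.+1)).
  by apply: ler_sum => c _; apply: amgm_nat p_gt0 (card_in_out_only c o).
have centers := amgm_nat R (ltn0Sn p) (card_preds_nonadj o).
rewrite -(amgm_const_mul R p) sumr_const -[_ *+ #|predsX o|]mulr_natr -!mulrA.
apply: ler_wpM2l; first by rewrite exprn_ge0 ?ler0n.
apply: ler_wpM2l; first by rewrite invr_ge0 exprn_ge0 ?ler0n.
by rewrite mulrA mulrC -natrX -natrM.
Qed.

Lemma sum_stars_bound (R : realFieldType) (p : nat) : (0 < p)%N ->
  \sum_(o in Xset E) \sum_(c in predsX o)
     ((#|in_only c o| * #|out_only c o| ^ p)%:R : R)
  <= (p%:R ^+ p / p.+2%:R ^+ p.+2) * #|Xset E|%:R ^+ p.+3.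
Proof.
move=> p_gt0; apply: le_trans (ler_sum _ (fun o _ => sum_centers_bound R o p_gt0)) _.
rewrite sumr_const -[_ *+ #|Xset E|]mulr_natr [_ ^+ p.+3]exprS.
set K : R := _ / _; set m : R := #|Xset E|%:R.
by rewrite [m * _]mulrC -(mulrA K).
Qed.

End StarNeighbourhoods.

Theorem claim4p9 (R : realFieldType) (k : nat) (V : finType) (E : rel V) :
  (5 <= k)%N -> loopless E ->
  sX R E k <=
    ((k - 1)%:R ^+ (k - 1) / (k + 1)%:R ^+ (k + 1)) * (alphaX R E) ^+ (k + 2).
Proof.
case: k => [//|p] k_ge5 _.
have p_gt0 : (0 < p)%N by case: p k_ge5.
rewrite subn1 /= addn1 addn2 /sX /alphaX expr_div_n natrX mulrA.
apply: ler_wpM2r; first by rewrite invr_ge0 exprn_ge0 ?ler0n.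
exact: le_trans (card_starsX E R p) (sum_stars_bound E R p_gt0).
Qed.
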